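(* Under the hypotheses of the following setting: $\{e_n\}_{n\in\mathbb{Z}}$ i.i.d. real random variables with a continuous, bounded, strictly positive density on $\mathbb{R}$; $q,d\ge1$ integers; $r,\mu_1,\mu_2,\phi_i,\psi_i\in\mathbb{R}$; and $\{y_n\}_{n\in\mathbb{Z}}$ the unique strictly stationary solution of $$y_n=\begin{cases}\mu_1+e_n+\sum_{i=1}^q\phi_ie_{n-i}, & \text{if } y_{n-d}\le r,\\ \mu_2+e_n+\sum_{i=1}^q\psi_ie_{n-i}, & \text{if } y_{n-d}>r,\end{cases}$$ there exists $\rho\in(0,1)$ such that for all $-\infty\le u_1<u_2\le\infty$ and $-\infty\le v_1<v_2\le\infty$, $$\operatorname{Cov}\big(\mathbb{1}(u_1<y_0\le u_2),\ \mathbb{1}(v_1<y_k\le v_2)\big)=O(\rho^k)\quad\text{as } k\to\infty.$$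
   Context: $\mathbb{1}(\cdot)$ denotes the indicator function. A solution means a process on the same probability space as $\{e_n\}$ satisfying the equation almost surely for every $n$. *)

From HB Require Import structures.
From mathcomp Require Import all_boot all_order all_algebra.
From mathcomp Require Import all_classical all_reals all_analysis.
Set Implicit Arguments. Unset Strict Implicit. Unset Printing Implicit Defensive.
Import Order.TTheory GRing.Theory Num.Theory numFieldNormedType.Exports.
Local Open Scope classical_set_scope.
Local Open Scope ring_scope.

Definition mutually_independent {d} {T : measurableType d} {R : realType}
  (P : probability T R) (X : int -> T -> R) : Prop :=
  forall (s : seq int) (A : int -> set R), uniq s ->
    (forall i, measurable (A i)) ->
    P (\bigcap_(i in [set i | i \in s]) (X i @^-1` A i)) =
    (\prod_(i <- s) P (X i @^-1` A i))%E.

Definition identically_distributed {d} {T : measurableType d} {R : realType}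
  (P : probability T R) (X : int -> T -> R) : Prop :=
  forall n (A : set R), measurable A -> P (X n @^-1` A) = P (X 0 @^-1` A).

Definition has_density {d} {T : measurableType d} {R : realType}
  (P : probability T R) (X : T -> R) (f : R -> R) : Prop :=
  forall A : set R, measurable A ->
    P (X @^-1` A) = (\int[lebesgue_measure]_(x in A) (f x)%:E)%E.

Definition strictly_stationary {d} {T : measurableType d} {R : realType}
  (P : probability T R) (Y : int -> T -> R) : Prop :=
  forall (h : int) (s : seq int) (A : int -> set R),
    (forall i, measurable (A i)) ->
    P (\bigcap_(t in [set t | t \in s]) (Y (t + h) @^-1` A t)) =
    P (\bigcap_(t in [set t | t \in s]) (Y t @^-1` A t)).

Definition ev_between {T} {R : realType} (X : T -> R) (u1 u2 : \bar R) : set T :=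
  [set w | (u1 < (X w)%:E)%E /\ ((X w)%:E <= u2)%E].

Definition tma_rhs {T} {R : realType} (q d : nat) (r mu1 mu2 : R)
  (phi psi : nat -> R) (e y : int -> T -> R) (n : int) (w : T) : R :=
  if y (n - d%:Z) w <= r
  then mu1 + e n w + \sum_(1 <= i < q.+1) phi i * e (n - i%:Z) w
  else mu2 + e n w + \sum_(1 <= i < q.+1) psi i * e (n - i%:Z) w.

From HB Require Import structures.
From mathcomp Require Import all_boot all_order all_algebra.
From mathcomp Require Import all_classical all_reals all_analysis.
From mathcomp Require Import measurable_realfun zify ring lra.
Import Order.TTheory GRing.Theory Num.Theory numFieldNormedType.Exports.
Local Open Scope classical_set_scope.
Local Open Scope ring_scope.
Set Implicit Arguments. Unset Strict Implicit. Unset Printing Implicit Defensive.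

(* For a small enough level c, the event
   R_t = {e_t <= c, |e_(t-1)| <= 1, ..., |e_(t-q)| <= 1} forces y_t <= r in either regime, and
   from then on y_(t+md), m >= 1, is a fixed function of e_(t-q), ..., e_(t+md). Looking back from
   k at the times k - j(q+1)d, j = 1..N, y_k therefore agrees with a function of the noises in
   [k - N(q+1)d - q, k] outside the event that no R_t occurs at these times; by independence that
   event has probability (1-p)^N, where p = P(R_t) > 0 because the density is positive. With N of
   order k / (2(q+1)d) the noise windows of y_0 and y_k are disjoint, so the two indicators are
   within O((1-p)^N) of independent variables, and their covariance decays geometrically. *)

Section ProbabilityFacts.
Context {R : realType} {dT : measure_display} {T : measurableType dT}
  (P : probability T R).

Lemma probability_fineK (X : set T) : measurable X -> P X = (fine (P X))%:E.
Proof. by move=> mX; rewrite fineK// fin_num_measure. Qed.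

Lemma fine_probability_ge0 (X : set T) : 0 <= fine (P X).
Proof. by apply: fine_ge0; exact: measure_ge0. Qed.

Lemma fine_probability_le1 (X : set T) : measurable X -> fine (P X) <= 1.
Proof.
move=> mX; rewrite -[1]/(fine 1%E); apply: fine_le; rewrite ?fin_num_measure//.
exact: probability_le1.
Qed.

Lemma fine_measure_setIC_split (X S : set T) : measurable X -> measurable S ->
  fine (P X) = fine (P (X `&` S)) + fine (P (X `&` ~` S)).
Proof.
move=> mX mS.
have mXS : measurable (X `&` S) by exact: measurableI.
have mXC : measurable (X `&` ~` S) by apply: measurableI => //; exact: measurableC.
rewrite -fineD ?fin_num_measure// -measureU//; first by rewrite -setIUr setUv setIT.
by apply/seteqP; split => w // [[_ a] [_ b]].
Qed.

Lemma fine_measure_dist_le (X X' S : set T) :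
  measurable X -> measurable X' -> measurable S -> X `&` S = X' `&` S ->
  `|fine (P X) - fine (P X')| <= fine (P (~` S)).
Proof.
move=> mX mX' mS XS.
have mC : measurable (~` S) by exact: measurableC.
have outside_le Z : measurable Z -> fine (P (Z `&` ~` S)) <= fine (P (~` S)).
  move=> mZ; have mZC : measurable (Z `&` ~` S) by exact: measurableI.
  apply: fine_le; rewrite ?fin_num_measure//.
  exact: (le_measure P (mem_set mZC) (mem_set mC) (@subIsetr _ Z (~` S))).
have := outside_le _ mX; have := outside_le _ mX'.
have := fine_probability_ge0 (X `&` ~` S); have := fine_probability_ge0 (X' `&` ~` S).
rewrite (fine_measure_setIC_split mX mS) (fine_measure_setIC_split mX' mS) XS.
by rewrite ler_norml; move=> *; apply/andP; split; lra.
Qed.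

Lemma covariance_indic (A B : set T) : measurable A -> measurable B ->
  covariance P (\1_A) (\1_B) = (fine (P (A `&` B)) - fine (P A) * fine (P B))%:E.
Proof.
move=> mA mB.
have mAB : measurable (A `&` B) by exact: measurableI.
have indic_L1 C : measurable C -> (\1_C : T -> R) \in Lfun P 1.
  by move=> mC; apply/Lfun1_integrable; exact: integrable_indic.
have AB : (\1_A * \1_B : T -> R) = \1_(A `&` B) by rewrite indicI.
rewrite covarianceE ?indic_L1 ?AB ?indic_L1// !expectation_indic//.
by rewrite (probability_fineK mA) (probability_fineK mB) (probability_fineK mAB) -EFinM -EFinB.
Qed.

Lemma dist_product_le (a b c a' b' eps : R) : 0 <= a <= 1 -> 0 <= b' <= 1 ->
  `|c - a' * b'| <= eps -> `|a - a'| <= eps -> `|b - b'| <= eps ->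
  `|c - a * b| <= 3 * eps.
Proof.
move=> /andP[a0 a1] /andP[b0 b1].
rewrite !ler_norml => /andP[h1 h2] /andP[h3 h4] /andP[h5 h6].
apply/andP; split; nra.
Qed.

Lemma covariance_indic_coupling (A B A' B' S : set T) :
  measurable A -> measurable B -> measurable A' -> measurable B' -> measurable S ->
  A `&` S = A' `&` S -> B `&` S = B' `&` S -> P (A' `&` B') = (P A' * P B')%E ->
  (`| covariance P (\1_A) (\1_B) | <= (3 * fine (P (~` S)))%:E)%E.
Proof.
move=> mA mB mA' mB' mS AS BS indep'.
have ABS : (A `&` B) `&` S = (A' `&` B') `&` S.
  by rewrite -[S in LHS]setIid setIACA AS BS setIACA setIid.
have fine_indep : fine (P (A' `&` B')) = fine (P A') * fine (P B').
  by rewrite indep' (probability_fineK mA') (probability_fineK mB') -EFinM.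
rewrite covariance_indic// abse_EFin lee_fin.
apply: (dist_product_le (a' := fine (P A')) (b' := fine (P B'))).
all: rewrite ?fine_probability_ge0 ?fine_probability_le1//.
- rewrite -fine_indep; apply: fine_measure_dist_le => //; exact: measurableI.
- exact: fine_measure_dist_le.
- exact: fine_measure_dist_le.
Qed.

End ProbabilityFacts.

Lemma ae_forall_int {R : realType} {dT : measure_display} {T : measurableType dT}
    (P : probability T R) (Q : int -> T -> Prop) :
  (forall n, {ae P, forall w, Q n w}) ->
  exists2 Z : set T, measurable Z /\ P Z = 0%E & forall w, ~ Z w -> forall n, Q n w.
Proof.
move=> aeQ.
have ae_nat m : \forall w \ae P, Q (Posz m) w /\ Q (Negz m) w.
  by apply: filterI; exact: aeQ.
have [Z [mZ PZ0 sub]] := ae_foralln ae_nat.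
exists Z => // w Zw.
have all_m m : Q (Posz m) w /\ Q (Negz m) w.
  by move: m; apply: contrapT => none; exact: Zw (sub w none).
by case=> m; have [] := all_m m.
Qed.

Lemma integral_itv_gt0 {R : realType} (f : R -> R) (a b : R) :
  continuous f -> (forall x, 0 < f x) -> a < b ->
  (0 < \int[lebesgue_measure]_(x in [set` `[a, b]]) (f x)%:E)%E.
Proof.
move=> fcont fpos ab.
pose x0 := (a + b) / 2.
have fx0 := fpos x0.
have half_lt : f x0 / 2 < f x0 by rewrite ltr_pdivrMr// ltr_pMr// ltr1n.
have := cvgr_gt (f x0) (fcont x0) (f x0 / 2) half_lt.
move=> near_gt; have [dl /= dl0 ball_gt] := proj1 (nbhs_ballP _ _) (near_gt _).
pose h := Num.min (dl / 2) ((b - a) / 2).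
have h0 : 0 < h by rewrite lt_min; apply/andP; split; apply: divr_gt0 => //; rewrite subr_gt0.
have hdl : h < dl by rewrite gt_min ltr_pdivrMr// ltr_pMr// ltr1n.
have hab : h <= (b - a) / 2 by rewrite ge_min lexx orbT.
have mJ : measurable [set` `[x0 - h, x0 + h]] by [].
have sub : [set` `[x0 - h, x0 + h]] `<=` [set` `[a, b]].
  move=> x /=; rewrite !in_itv /= => /andP[h1 h2].
  by apply/andP; split; rewrite /x0 in h1 h2; lra.
have mfE D : measurable_fun D (fun x => (f x)%:E).
  apply/measurable_EFinP; apply: measurable_funS measurableT (@subsetT _ _) _.
  exact: continuous_measurable_fun.
apply: (lt_le_trans _ (@ge0_subset_integral _ _ _ lebesgue_measure _ _ mJ (measurable_itv _)
  (fun x => (f x)%:E) (mfE _) (fun x _ => ltW (fpos x)) sub)).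
have cst_le x : [set` `[x0 - h, x0 + h]] x -> ((cst (f x0 / 2)%:E) x <= (f x)%:E)%E.
  move=> /=; rewrite in_itv /= => /andP[h1 h2]; rewrite lee_fin ltW//.
  apply: ball_gt => /=; rewrite -ball_normE /ball /=.
  apply: le_lt_trans hdl; rewrite ler_norml; apply/andP; split; lra.
have cst_ge0 x : [set` `[x0 - h, x0 + h]] x -> (0 <= (cst (f x0 / 2)%:E) x)%E.
  by move=> _; rewrite lee_fin ltW// divr_gt0.
apply: (lt_le_trans _ (@ge0_le_integral _ _ _ lebesgue_measure _ mJ (cst (f x0 / 2)%:E)
  (fun x => (f x)%:E) cst_ge0 (measurable_cst _) (mfE _) cst_le)).
rewrite integral_cst// [X in (_ * X)%E](lebesgue_measure_itv `[x0 - h, x0 + h]) /=.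
rewrite lte_fin ifT; last by lra.
by rewrite mule_gt0// lte_fin ?divr_gt0//; lra.
Qed.

Lemma bernoulli_ineq {R : realFieldType} (x : R) n :
  0 <= x <= 1 -> 1 - n%:R * x <= (1 - x) ^+ n.
Proof.
move=> /andP[x0 x1]; elim: n => [|n IH]; first by rewrite mul0r subr0 expr0.
rewrite exprS -natr1.
have one_subx_ge0 : 0 <= 1 - x by lra.
have := ler_wpM2l one_subx_ge0 IH; have := mulr_ge0 (ler0n R n) (mulr_ge0 x0 x0); nra.
Qed.

Lemma expr_divn_le {R : realFieldType} (p : R) (m k : nat) : 0 < p <= 1 -> (2 <= m)%N ->
  (1 - p) ^+ (k %/ m) <= (1 - p / m%:R) ^+ k / (1 - p / m%:R) ^+ m.
Proof.
move=> /andP[p0 p1] m2.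
have m0 : 0 < m%:R :> R by rewrite ltr0n; lia.
have pm_le1 : p / m%:R <= 1.
  by rewrite ler_pdivrMr// mul1r; apply: (le_trans p1); rewrite ler1n; lia.
have pm_ge0 : 0 <= p / m%:R by rewrite divr_ge0// ltW.
set rho := 1 - p / m%:R.
have rho_ge0 : 0 <= rho by rewrite /rho; lra.
have rho_gt0 : 0 < rho.
  rewrite /rho subr_gt0 ltr_pdivrMr// mul1r; apply: (le_lt_trans p1).
  by rewrite ltr1n; lia.
have bern : 1 - p <= rho ^+ m.
  have := @bernoulli_ineq R (p / m%:R) m; rewrite mulrCA mulfV ?gt_eqF// mulr1; apply.
  by rewrite pm_ge0.
have pow_le : (1 - p) ^+ (k %/ m) <= rho ^+ (m * (k %/ m)).
  have one_subp_ge0 : 0 <= 1 - p by lra.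
  rewrite exprM; apply: lerXn2r; rewrite ?nnegrE ?exprn_ge0//; exact: le_trans bern.
have k_lt : (k < (k %/ m).+1 * m)%N by apply: ltn_ceil; lia.
rewrite ler_pdivlMr ?exprn_gt0//.
apply: (le_trans (ler_wpM2r (exprn_ge0 _ rho_ge0) pow_le)).
rewrite -exprD; apply: ler_wiXn2l; rewrite /rho; try lra.
by rewrite addnC mulnC -mulSn ltnW.
Qed.

Section Cylinders.
Context {R : realType} {dT : measure_display} {T : measurableType dT}
  (P : probability T R) (e : int -> T -> R).
Hypothesis me : forall n, measurable_fun setT (e n).
Hypothesis indep : mutually_independent P e.

Definition cylinder (I : seq int) (A : int -> set R) : set T :=
  \bigcap_(i in [set i | i \in I]) (e i @^-1` A i).

Definition cylinders (I : seq int) : set (set T) :=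
  [set X | exists2 A : int -> set R, (forall i, measurable (A i)) & X = cylinder I A].

Lemma cylinder_nil A : cylinder [::] A = setT.
Proof. by apply/seteqP; split => w //= _ i; rewrite in_nil. Qed.

Lemma cylinder_cons i I A : cylinder (i :: I) A = e i @^-1` A i `&` cylinder I A.
Proof.
apply/seteqP; split => w /=.
  move=> h; split; first by apply: h; rewrite /= mem_head.
  by move=> j /= jI; apply: h; rewrite /= in_cons jI orbT.
move=> [h1 h2] j /=; rewrite in_cons => /orP[/eqP->//|jI]; exact: h2.
Qed.

Lemma cylinder_cat I J A : cylinder (I ++ J) A = cylinder I A `&` cylinder J A.
Proof.
elim: I => [|i I IH]; first by rewrite cylinder_nil setTI.
by rewrite cat_cons !cylinder_cons IH setIA.
Qed.

Lemma eq_cylinder I A B : {in I, A =1 B} -> cylinder I A = cylinder I B.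
Proof.
elim: I => [|i I IH] AB; first by rewrite !cylinder_nil.
rewrite !cylinder_cons AB ?mem_head// IH// => j jI; apply: AB; by rewrite in_cons jI orbT.
Qed.

Lemma cylinderI I A B : cylinder I A `&` cylinder I B = cylinder I (fun i => A i `&` B i).
Proof.
elim: I => [|i I IH]; first by rewrite !cylinder_nil setTI.
rewrite !cylinder_cons -IH; apply/seteqP; split => w /=; tauto.
Qed.

Lemma measurable_cylinder I A : (forall i, measurable (A i)) -> measurable (cylinder I A).
Proof.
move=> mA; elim: I => [|i I IH]; first by rewrite cylinder_nil.
rewrite cylinder_cons; apply: measurableI => //.
by rewrite -(setTI (_ @^-1` _)); apply: me.
Qed.

Lemma cylinders_measurable I : cylinders I `<=` measurable.
Proof. by move=> X [A mA ->]; exact: measurable_cylinder. Qed.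

Lemma sigma_cylinders_measurable I : <<s cylinders I >> `<=` measurable.
Proof.
by apply: smallest_sub; [exact: sigma_algebra_measurable | exact: cylinders_measurable].
Qed.

Lemma indep_cylinder I J A B : uniq (I ++ J) ->
  (forall i, measurable (A i)) -> (forall i, measurable (B i)) ->
  P (cylinder I A `&` cylinder J B) = (P (cylinder I A) * P (cylinder J B))%E.
Proof.
move=> IJ mA mB.
pose C i := if i \in I then A i else B i.
have mC i : measurable (C i) by rewrite /C; case: ifP.
have eA : cylinder I A = cylinder I C by apply: eq_cylinder => i iI; rewrite /C iI.
have eB : cylinder J B = cylinder J C.
  apply: eq_cylinder => i iJ; rewrite /C; case: ifP => // iI; exfalso.
  by move: IJ; rewrite cat_uniq => /and3P[_ /hasP[]]; exists i.
move: (IJ); rewrite cat_uniq => /and3P[uI _ uJ].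
by rewrite eA eB -cylinder_cat /cylinder indep// big_cat/= -!indep.
Qed.

(* Dynkin's pi-lambda theorem: [X |-> P (X `&` Y)] and [X |-> P X * P Y] are finite measures
   agreeing on the intersection-stable class of cylinders. *)
Lemma indep_sigma_cylinders_set I (Y : set T) : measurable Y ->
  (forall X, cylinders I X -> P (X `&` Y) = (P X * P Y)%E) ->
  forall X, <<s cylinders I >> X -> P (X `&` Y) = (P X * P Y)%E.
Proof.
move=> mY indepY X.
have PYE := probability_fineK P mY.
pose restr := mrestr P mY.
pose scaled := mscale (NngNum (fine_probability_ge0 P Y)) P.
have cylinders_setI : setI_closed (cylinders I).
  move=> _ _ [A mA ->] [B mB ->]; exists (fun i => A i `&` B i); last exact: cylinderI.
  by move=> i; exact: measurableI.
have gen : <<s setT, [set X | cylinders I X /\ X `<=` setT] >> = <<s cylinders I >>.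
  by congr (<<s _, _ >>); apply/seteqP; split => Z /=; [case | split].
have agree Z : <<s setT, [set X | cylinders I X /\ X `<=` setT] >> Z -> restr Z = scaled Z.
  apply: (g_sigma_algebra_measure_unique_trace (cylinders I) setT) => //.
  - by move=> Z' [GZ _]; exact: cylinders_measurable GZ.
  - move=> Z1 Z2 [G1 _] [G2 _]; split => //; exact: cylinders_setI.
  - change (P (setT `&` Y) = (fine (P Y))%:E * P setT)%E.
    by rewrite setTI probability_setT mule1 -PYE.
  - move=> Z' [GZ _]; change (P (Z' `&` Y) = (fine (P Y))%:E * P Z')%E.
    by rewrite indepY// muleC -PYE.
  - by change (P (setT `&` Y) < +oo)%E; rewrite setTI PYE ltry.
rewrite -gen => /agree; change (P (X `&` Y) = (fine (P Y))%:E * P X -> P (X `&` Y) = P X * P Y)%E.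
by rewrite muleC -PYE.
Qed.

Lemma indep_sigma_cylinders I J X Y : uniq (I ++ J) ->
  <<s cylinders I >> X -> <<s cylinders J >> Y -> P (X `&` Y) = (P X * P Y)%E.
Proof.
move=> IJ sX sY.
have mX := sigma_cylinders_measurable sX.
have indep_cylX Z : cylinders J Z -> P (Z `&` X) = (P Z * P X)%E.
  move=> [B mB ->]; rewrite setIC muleC.
  apply: (indep_sigma_cylinders_set (I := I) (measurable_cylinder J mB)) => [_ [A mA ->]|//].
  exact: indep_cylinder.
by rewrite setIC muleC; apply: (indep_sigma_cylinders_set (I := J) mX).
Qed.

End Cylinders.

Definition int_iota (lo : int) (n : nat) : seq int := [seq lo + i%:Z | i <- iota 0 n].

Lemma mem_int_iota lo n x : (x \in int_iota lo n) = (lo <= x < lo + n%:Z).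
Proof.
apply/mapP/idP; first by move=> [i]; rewrite mem_iota => /andP[_ ?] ->; lia.
by move=> h; exists `|x - lo|%N; [rewrite mem_iota; lia | lia].
Qed.

Lemma int_iota_uniq lo n : uniq (int_iota lo n).
Proof. by rewrite map_inj_uniq ?iota_uniq// => i j /= h; lia. Qed.

Lemma cat_int_iota_uniq lo1 n1 lo2 n2 : lo1 + n1%:Z <= lo2 ->
  uniq (int_iota lo1 n1 ++ int_iota lo2 n2).
Proof.
move=> h; rewrite cat_uniq !int_iota_uniq /= andbT; apply/hasPn => x.
by rewrite !mem_int_iota => ?; apply/negP; lia.
Qed.

Lemma measurable_sum_in {dU : measure_display} {U : measurableType dU} {R : realType}
    (I : eqType) (s : seq I) (h : I -> U -> R) :
  (forall i, i \in s -> measurable_fun setT (h i)) ->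
  measurable_fun setT (fun x => \sum_(i <- s) h i x).
Proof.
elim: s => [|i s IH] hs; first by under eq_fun do rewrite big_nil; exact: measurable_cst.
under eq_fun do rewrite big_cons.
apply: measurable_funD; first by apply: hs; rewrite mem_head.
by apply: IH => j js; apply: hs; rewrite in_cons js orbT.
Qed.

Lemma measurable_fun_mem {dU : measure_display} {U : measurableType dU} (A : set U) :
  measurable A -> measurable_fun setT (fun w => w \in A).
Proof.
move=> mA; apply: (measurable_fun_bool true) => //.
rewrite setTI (_ : _ @^-1` _ = A)//; apply/seteqP; split => w /=; first by move=> /set_mem.
by move=> Aw; apply/mem_set.
Qed.

Lemma measurable_ev_between {dU : measure_display} {U : measurableType dU} {R : realType}
    (X : U -> R) u1 u2 :
  measurable_fun setT X -> measurable (ev_between X u1 u2).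
Proof.
move=> mX.
have : measurable (setT `&` (EFin \o X) @^-1` [set` Interval (BRight u1) (BRight u2)]).
  by apply: (proj2 (measurable_EFinP _ _) mX) => //; exact: emeasurable_itv.
rewrite setTI (_ : _ @^-1` _ = ev_between X u1 u2)//.
apply/seteqP; split => w /=; rewrite /ev_between /= in_itv /=; first by move=> /andP[].
by move=> [-> ->].
Qed.

Lemma ev_between_setI {U} {R : realType} (X X' : U -> R) (S : set U) u1 u2 :
  (forall w, S w -> X w = X' w) -> ev_between X u1 u2 `&` S = ev_between X' u1 u2 `&` S.
Proof.
by move=> XX'; apply/seteqP; split => w [Xw Sw]; split => //; move: Xw; rewrite /ev_between /= XX'.
Qed.

Section GeneratedMeasurability.
Context {R : realType} {dT : measure_display} {T : measurableType dT}
  (e : int -> T -> R).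

Local Notation gen I := (g_sigma_algebraType (cylinders e I)).

Lemma measurable_noise_gen I i :
  i \in I -> measurable_fun (setT : set (gen I)) (e i : gen I -> R).
Proof.
move=> iI _ B mB; rewrite setTI; apply: sub_sigma_algebra.
exists (fun j => if j == i then B else setT); first by move=> j; case: ifP.
apply/seteqP; split => w /=; first by move=> Bw j /= jI; case: ifP => // /eqP ->.
by move=> /(_ i iI); rewrite eqxx.
Qed.

Lemma measurable_cylinder_gen I J A : {subset J <= I} -> (forall i, measurable (A i)) ->
  measurable (cylinder e J A : set (gen I)).
Proof.
move=> JI mA; elim: J JI => [|j J IH] JI; first by rewrite cylinder_nil; exact: measurableT.
rewrite cylinder_cons; apply: measurableI.
  by rewrite -(setTI (_ @^-1` _)); apply: measurable_noise_gen => //; apply: JI; exact: mem_head.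
by apply: IH => x xJ; apply: JI; rewrite in_cons xJ orbT.
Qed.

End GeneratedMeasurability.

Section ThresholdMA.
Context {R : realType} {dT : measure_display} {T : measurableType dT}
  (e : int -> T -> R) (q d : nat) (r mu1 mu2 : R) (phi psi : nat -> R).

Definition ma_term (mu : R) (c : nat -> R) (n : int) (w : T) : R :=
  mu + e n w + \sum_(1 <= i < q.+1) c i * e (n - i%:Z) w.

(* [tma_after t m w] is y_(t + m d) computed under y_t <= r; the value [r] at [m = 0] only
   records that assumption. *)
Fixpoint tma_after (t : int) (m : nat) (w : T) : R :=
  match m with
  | 0 => r
  | m'.+1 => if tma_after t m' w <= r then ma_term mu1 phi (t + (m'.+1 * d)%N%:Z) w
             else ma_term mu2 psi (t + (m'.+1 * d)%N%:Z) w
  end.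

Definition regen_level : R :=
  r - `|mu1| - `|mu2| - \sum_(1 <= i < q.+1) (`|phi i| + `|psi i|).

Definition regen_window (t : int) : seq int := int_iota (t - q%:Z) q.+1.

Definition regen_set (t j : int) : set R :=
  if j == t then [set` `]-oo, regen_level]] else [set` `[-1, 1]].

Definition regen_event (t : int) : set T := cylinder e (regen_window t) (regen_set t).

Lemma measurable_regen_set t j : measurable (regen_set t j).
Proof. by rewrite /regen_set; case: ifP. Qed.

Definition regen_time (k : int) (j : nat) : int := k - (j * q.+1 * d)%N%:Z.

(* y_k read off the earliest regeneration among the times [regen_time k j], 0 < j <= N,
   and the junk value 0 when there is none. *)
Fixpoint coupled (k : int) (N : nat) (w : T) : R :=
  match N with
  | 0 => 0
  | N'.+1 => if w \in regen_event (regen_time k N'.+1)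
             then tma_after (regen_time k N'.+1) (N'.+1 * q.+1) w
             else coupled k N' w
  end.

Fixpoint no_regen (k : int) (N : nat) : set T :=
  match N with
  | 0 => setT
  | N'.+1 => no_regen k N' `&` ~` regen_event (regen_time k N'.+1)
  end.

Lemma coupledS k N w : coupled k N.+1 w =
  if w \in regen_event (regen_time k N.+1) then tma_after (regen_time k N.+1) (N.+1 * q.+1) w
  else coupled k N w.
Proof. by []. Qed.

Lemma no_regenS k N :
  no_regen k N.+1 = no_regen k N `&` ~` regen_event (regen_time k N.+1).
Proof. by []. Qed.

Definition coupling_window (k : int) (N : nat) : seq int :=
  int_iota (regen_time k N - q%:Z) (N * q.+1 * d + q).+1.

Definition solves_tma (y : int -> T -> R) (w : T) : Prop :=
  forall n, y n w = tma_rhs q d r mu1 mu2 phi psi e y n w.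

Lemma ma_term_le (mu : R) (c : nat -> R) (t : int) (w : T) :
  (forall i, (1 <= i <= q)%N -> `|e (t - i%:Z) w| <= 1) ->
  e t w <= r - `|mu| - \sum_(1 <= i < q.+1) `|c i| -> ma_term mu c t w <= r.
Proof.
move=> small et; rewrite /ma_term.
have sum_le : \sum_(1 <= i < q.+1) c i * e (t - i%:Z) w <= \sum_(1 <= i < q.+1) `|c i|.
  apply: ler_sum_nat => i /andP[i1 iq]; apply: (le_trans (ler_norm _)).
  by rewrite normrM -[leRHS]mulr1 ler_wpM2l// small// i1 -ltnS.
have mu_le := ler_norm mu; clear small; lra.
Qed.

Lemma regen_event_ma_le t w : regen_event t w ->
  ma_term mu1 phi t w <= r /\ ma_term mu2 psi t w <= r.
Proof.
move=> Rw.
have small i : (1 <= i <= q)%N -> `|e (t - i%:Z) w| <= 1.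
  move=> iq; have := Rw (t - i%:Z); rewrite /regen_set ifF; last by apply/negbTE; lia.
  by rewrite /= in_itv /= ler_norml; apply; rewrite /regen_window mem_int_iota; lia.
have : e t w <= regen_level.
  have := Rw t; rewrite /regen_set eqxx /= in_itv /=; apply.
  by rewrite /regen_window mem_int_iota; lia.
have sum_ge0 (c : nat -> R) : 0 <= \sum_(1 <= i < q.+1) `|c i| by apply: sumr_ge0 => i _.
have := sum_ge0 phi; have := sum_ge0 psi; have := normr_ge0 mu1; have := normr_ge0 mu2.
rewrite /regen_level big_split /= => *.
by split; apply: ma_term_le => //; clear small sum_ge0; lra.
Qed.

Section Pathwise.
Variables (y : int -> T -> R) (w : T).
Hypothesis sol : solves_tma y w.

Lemma regen_event_le t : regen_event t w -> y t w <= r.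
Proof. by move=> /regen_event_ma_le[]; rewrite sol /tma_rhs; case: ifP. Qed.

Lemma tma_after_le t m : y t w <= r ->
  (y (t + (m * d)%N%:Z) w <= r) = (tma_after t m w <= r).
Proof.
move=> yt; elim: m => [|m IH]; first by rewrite mul0n addr0 yt lexx.
rewrite sol /tma_rhs /=.
have -> : t + (m.+1 * d)%N%:Z - d%:Z = t + (m * d)%N%:Z by rewrite mulSn; lia.
by rewrite IH.
Qed.

Lemma tma_afterE t m : y t w <= r -> (0 < m)%N ->
  y (t + (m * d)%N%:Z) w = tma_after t m w.
Proof.
move=> yt; case: m => [//|m] _; rewrite sol /tma_rhs /=.
have -> : t + (m.+1 * d)%N%:Z - d%:Z = t + (m * d)%N%:Z by rewrite mulSn; lia.
by rewrite tma_after_le.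
Qed.

Lemma coupledE k N : ~ no_regen k N w -> y k w = coupled k N w.
Proof.
elim: N => [|N IH]; first by case.
rewrite coupledS no_regenS; case: ifPn => [/set_mem Rw _ | /negP Rw regen].
  rewrite -tma_afterE ?muln_gt0 ?(regen_event_le Rw)//; congr (y _ w); rewrite /regen_time; lia.
by apply: IH => none; apply: regen; split => // /mem_set.
Qed.

End Pathwise.

Section WindowMeasurability.
Variables (I : seq int) (lo hi : int).
Hypothesis window_in : forall j, lo <= j <= hi -> j \in I.

Local Notation gen := (g_sigma_algebraType (cylinders e I)).

Lemma measurable_ma_term_gen mu c n : lo <= n - q%:Z -> n <= hi ->
  measurable_fun (setT : set gen) (ma_term mu c n : gen -> R).
Proof.
move=> lo_n n_hi.
have noise j : lo <= j <= hi -> measurable_fun (setT : set gen) (e j : gen -> R).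
  by move=> ?; apply: measurable_noise_gen; exact: window_in.
apply: measurable_funD; first apply: measurable_funD.
- exact: measurable_cst.
- by apply: noise; lia.
apply: (@measurable_sum_in _ gen _ _ _ (fun i (w : gen) => c i * e (n - i%:Z) w)) => i.
rewrite mem_index_iota => iq; apply: measurable_funM; first exact: measurable_cst.
by apply: noise; lia.
Qed.

Lemma measurable_tma_after_gen t m : lo <= t - q%:Z -> t + (m * d)%N%:Z <= hi ->
  measurable_fun (setT : set gen) (tma_after t m : gen -> R).
Proof.
move=> lo_t; elim: m => [|m IH] m_hi /=; first exact: measurable_cst.
apply: measurable_fun_ifT.
- by apply: measurable_fun_ler; [apply: IH; lia | exact: measurable_cst].
- by apply: measurable_ma_term_gen; lia.
- by apply: measurable_ma_term_gen; lia.
Qed.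

Lemma measurable_regen_event_gen t : lo <= t - q%:Z -> t <= hi ->
  measurable (regen_event t : set gen).
Proof.
move=> lo_t t_hi; apply: measurable_cylinder_gen; last exact: measurable_regen_set.
by move=> j; rewrite mem_int_iota => ?; apply: window_in; lia.
Qed.

Lemma measurable_coupled_gen k N : lo <= regen_time k N - q%:Z -> k <= hi ->
  measurable_fun (setT : set gen) (coupled k N : gen -> R).
Proof.
rewrite /regen_time => lo_k k_hi; elim: N lo_k => [|N IH] lo_k; first exact: measurable_cst.
apply: measurable_fun_ifT.
- apply: (@measurable_fun_mem _ gen).
  by apply: measurable_regen_event_gen; rewrite /regen_time; lia.
- by apply: measurable_tma_after_gen; rewrite /regen_time; lia.
- by apply: IH; lia.
Qed.

Lemma measurable_no_regen_gen k N : lo <= regen_time k N - q%:Z -> k <= hi ->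
  measurable (no_regen k N : set gen).
Proof.
rewrite /regen_time => lo_k k_hi; elim: N lo_k => [|N IH] lo_k; first exact: measurableT.
apply: measurableI; first by apply: IH; lia.
by apply: measurableC; apply: measurable_regen_event_gen; rewrite /regen_time; lia.
Qed.

End WindowMeasurability.

Lemma mem_coupling_window k N j :
  regen_time k N - q%:Z <= j <= k -> j \in coupling_window k N.
Proof. by rewrite mem_int_iota /regen_time; lia. Qed.

Lemma measurable_coupled_window k N :
  measurable_fun setT (coupled k N : g_sigma_algebraType (cylinders e (coupling_window k N)) -> R).
Proof. by apply: measurable_coupled_gen => //; exact: mem_coupling_window. Qed.

Lemma measurable_no_regen_window k N :
  measurable (no_regen k N : set (g_sigma_algebraType (cylinders e (coupling_window k N)))).
Proof. by apply: measurable_no_regen_gen => //; exact: mem_coupling_window. Qed.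

Section Regeneration.
Variables (P : probability T R) (f : R -> R).
Hypothesis me : forall n, measurable_fun setT (e n).
Hypothesis indep : mutually_independent P e.
Hypothesis ident : identically_distributed P e.
Hypothesis dens : has_density P (e 0) f.
Hypothesis fcont : continuous f.
Hypothesis fpos : forall x, 0 < f x.

Definition regen_prob : R :=
  fine (P (e 0 @^-1` [set` `[-1, 1]])) ^+ q * fine (P (e 0 @^-1` [set` `]-oo, regen_level]])).

Lemma measurable_noise_preimage n (A : set R) : measurable A -> measurable (e n @^-1` A).
Proof. by move=> mA; rewrite -(setTI (_ @^-1` _)); apply: me. Qed.

Lemma noise_itv_prob_gt0 a b : a < b -> 0 < fine (P (e 0 @^-1` [set` `[a, b]])).
Proof.
move=> ab; have := integral_itv_gt0 fcont fpos ab; rewrite -dens; last exact: measurable_itv.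
move=> P_gt0; apply: fine_gt0; rewrite P_gt0 /=.
by rewrite (probability_fineK P (measurable_noise_preimage 0 (measurable_itv _))) ltry.
Qed.

Lemma regen_prob_gt0 : 0 < regen_prob.
Proof.
have level_gt0 : 0 < fine (P (e 0 @^-1` [set` `]-oo, regen_level]])).
  have lt : regen_level - 1 < regen_level by lra.
  apply: (lt_le_trans (noise_itv_prob_gt0 lt)).
  apply: fine_le; rewrite ?fin_num_measure//; try exact: measurable_noise_preimage.
  apply: le_measure; rewrite ?inE; try exact: measurable_noise_preimage.
  by move=> w /=; rewrite !in_itv /= => /andP[].
have unit_gt0 : 0 < fine (P (e 0 @^-1` [set` `[-1, 1]])) by apply: noise_itv_prob_gt0; lra.
by rewrite /regen_prob mulr_gt0// exprn_gt0.
Qed.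

Lemma prob_regen_event t : P (regen_event t) = regen_prob%:E.
Proof.
rewrite /regen_event /cylinder indep ?int_iota_uniq//; last exact: measurable_regen_set.
rewrite /regen_window /int_iota big_map.
rewrite (_ : iota 0 q.+1 = index_iota 0 q.+1); last by rewrite /index_iota subn0.
rewrite big_nat_recr //= (_ : t - q%:Z + q%:Z = t); last by lia.
rewrite {2}/regen_set eqxx ident; last exact: measurable_itv.
rewrite (probability_fineK P (measurable_noise_preimage 0 (measurable_itv _))).
rewrite big_nat_cond (eq_bigr (fun _ => (fine (P (e 0 @^-1` [set` `[-1, 1]])))%:E)); last first.
  move=> i; rewrite andbT => /andP[_ iq].
  rewrite /regen_set ifF; last by apply/negbTE; lia.
  rewrite ident; last exact: measurable_itv.
  by rewrite (probability_fineK P (measurable_noise_preimage 0 (measurable_itv _))).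
by rewrite -big_nat_cond prodEFin prodr_const_nat subn0.
Qed.

Lemma regen_prob_le1 : regen_prob <= 1.
Proof.
rewrite -lee_fin -(prob_regen_event 0); apply: probability_le1.
by apply: measurable_cylinder => //; exact: measurable_regen_set.
Qed.

(* The event at [regen_time k N.+1] only involves noises strictly before the window of
   [no_regen k N], because (q + 1) d > q. *)
Lemma prob_no_regen k N : (0 < d)%N -> P (no_regen k N) = ((1 - regen_prob) ^+ N)%:E.
Proof.
move=> d_gt0; elim: N => [|N IH]; first by rewrite /= probability_setT expr0.
rewrite no_regenS setIC (indep_sigma_cylinders me indep
  (I := regen_window (regen_time k N.+1)) (J := coupling_window k N)).
- rewrite probability_setC; last first.
    by apply: measurable_cylinder => //; exact: measurable_regen_set.
  by rewrite IH prob_regen_event -EFinB -EFinM exprS.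
- by apply: cat_int_iota_uniq; rewrite /regen_time; nia.
- apply: (@measurableC _ (g_sigma_algebraType (cylinders e _))).
  apply: (measurable_regen_event_gen (lo := regen_time k N.+1 - q%:Z)
    (hi := regen_time k N.+1)) => // j.
  by rewrite mem_int_iota; lia.
- exact: measurable_no_regen_window.
Qed.

End Regeneration.

Section CovarianceBound.
Variables (P : probability T R) (y : int -> T -> R).
Hypothesis me : forall n, measurable_fun setT (e n).
Hypothesis indep : mutually_independent P e.
Hypothesis ident : identically_distributed P e.
Hypothesis d_gt0 : (0 < d)%N.
Hypothesis my : forall n, measurable_fun setT (y n).
Hypothesis ae_y : forall n : int,
  {ae P, forall w, y n w = tma_rhs q d r mu1 mu2 phi psi e y n w}.

Lemma measurable_no_regen k N : measurable (no_regen k N).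
Proof.
apply: (sigma_cylinders_measurable me (I := coupling_window k N)).
exact: measurable_no_regen_window.
Qed.

Lemma prob_coupling_fail_le N k (Z : set T) : measurable Z -> P Z = 0%E ->
  fine (P (Z `|` (no_regen 0 N `|` no_regen k N))) <= 2 * (1 - regen_prob P) ^+ N.
Proof.
move=> mZ PZ0.
have mNR j : measurable (no_regen j N) by exact: measurable_no_regen.
rewrite -[leRHS]/(fine (2 * (1 - regen_prob P) ^+ N)%:E); apply: fine_le => //.
  by rewrite fin_num_measure//; apply: measurableU => //; exact: measurableU.
apply: (le_trans (measureU2 _ _ _)) => //; first exact: measurableU.
rewrite [X in (X + _)%E](_ : _ = 0%E) // add0e.
apply: (le_trans (measureU2 _ _ _)) => //.
rewrite [X in (X + _)%E](_ : _ = ((1 - regen_prob P) ^+ N)%:E); last exact: prob_no_regen.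
rewrite [X in (_ + X)%E](_ : _ = ((1 - regen_prob P) ^+ N)%:E); last exact: prob_no_regen.
by rewrite -EFinD lee_fin; lra.
Qed.

Lemma covariance_coupled_le N (k : nat) u1 u2 v1 v2 : (N * q.+1 * d + q < k)%N ->
  (`| covariance P (\1_(ev_between (y 0) u1 u2)) (\1_(ev_between (y k%:Z) v1 v2)) |
     <= (6 * (1 - regen_prob P) ^+ N)%:E)%E.
Proof.
move=> far.
have [Z [mZ PZ0] solZ] := ae_forall_int ae_y.
pose S := ~` Z `&` (~` no_regen 0 N `&` ~` no_regen k N).
have mNR j : measurable (no_regen j N) by exact: measurable_no_regen.
have mS : measurable S by apply: measurableI; [|apply: measurableI]; apply: measurableC.
have coupled0 w : S w -> y 0 w = coupled 0 N w.
  by case=> Zw [NR0 _]; apply: coupledE NR0; exact: solZ.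
have coupledk w : S w -> y k%:Z w = coupled k N w.
  by case=> Zw [_ NRk]; apply: coupledE NRk; exact: solZ.
have gen0 := measurable_ev_between u1 u2 (measurable_coupled_window (k := 0) (N := N)).
have genk := measurable_ev_between v1 v2 (measurable_coupled_window (k := k) (N := N)).
have mA' : measurable (ev_between (coupled 0 N) u1 u2).
  exact: (sigma_cylinders_measurable me (I := coupling_window 0 N)).
have mB' : measurable (ev_between (coupled k N) v1 v2).
  exact: (sigma_cylinders_measurable me (I := coupling_window k N)).
have disjoint : uniq (coupling_window 0 N ++ coupling_window k N).
  by apply: cat_int_iota_uniq; rewrite /regen_time; lia.
have := covariance_indic_coupling (P := P) (measurable_ev_between u1 u2 (my 0))
  (measurable_ev_between v1 v2 (my k%:Z)) mA' mB' mS
  (ev_between_setI u1 u2 coupled0) (ev_between_setI v1 v2 coupledk)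
  (indep_sigma_cylinders me indep disjoint gen0 genk).
move/le_trans; apply.
have -> : ~` S = Z `|` (no_regen 0 N `|` no_regen k N) by rewrite /S !setCI !setCK.
by have := prob_coupling_fail_le N k mZ PZ0; rewrite lee_fin; lra.
Qed.

End CovarianceBound.

End ThresholdMA.

Theorem mainTheorem4 (R : realType) (dT : measure_display) (T : measurableType dT)
  (P : probability T R) (e : int -> T -> R) (f : R -> R)
  (q d : nat) (r mu1 mu2 : R) (phi psi : nat -> R) (y : int -> T -> R) :
  (forall n, measurable_fun setT (e n)) ->
  mutually_independent P e ->
  identically_distributed P e ->
  has_density P (e 0) f ->
  continuous f ->
  (exists M : R, forall x, `|f x| <= M) ->
  (forall x, 0 < f x) ->
  (1 <= q)%N -> (1 <= d)%N ->
  (forall n, measurable_fun setT (y n)) ->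
  (forall n : int, {ae P, forall w, y n w = tma_rhs q d r mu1 mu2 phi psi e y n w}) ->
  strictly_stationary P y ->
  exists rho : R, 0 < rho < 1 /\
    forall u1 u2 v1 v2 : \bar R, (u1 < u2)%E -> (v1 < v2)%E ->
      exists (C : R) (K : nat), forall k : nat, (K <= k)%N ->
        (`| covariance P (\1_(ev_between (y (0:int)%R) u1 u2))
                         (\1_(ev_between (y k%:Z) v1 v2)) |
           <= (C * rho ^+ k)%:E)%E.
Proof.
move=> me indep ident dens fcont _ fpos _ d_gt0 my ae_y _.
have p_gt0 := regen_prob_gt0 q r mu1 mu2 phi psi me dens fcont fpos.
have p_le1 := regen_prob_le1 q r mu1 mu2 phi psi me indep ident.
set p := regen_prob e q r mu1 mu2 phi psi P in p_gt0 p_le1 *.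
pose m := (2 * q.+1 * d)%N.
have m_ge2 : (2 <= m)%N by rewrite /m -mulnA; apply: leq_pmulr; rewrite muln_gt0 d_gt0.
have m_gt0 : 0 < m%:R :> R by rewrite ltr0n; lia.
exists (1 - p / m%:R); split.
  apply/andP; split; last by rewrite ltrBlDr ltrDl divr_gt0.
  rewrite subr_gt0 ltr_pdivrMr// mul1r; apply: (le_lt_trans p_le1).
  by rewrite ltr1n; lia.
move=> u1 u2 v1 v2 _ _.
exists (6 / (1 - p / m%:R) ^+ m), (2 * q.+1)%N => k k_large.
have far : (k %/ m * q.+1 * d + q < k)%N.
  have : (k %/ m * m = k %/ m * q.+1 * d * 2)%N by rewrite /m; ring.
  by have := leq_divM k m; lia.
apply: (le_trans (covariance_coupled_le me indep ident d_gt0 my ae_y u1 u2 v1 v2 far)).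
by rewrite lee_fin mulrAC -mulrA ler_wpM2l// expr_divn_le// p_gt0.
Qed.
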